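(* Let $M$ be a finite abelian group of order $m$, $J$ a Jacobi function on $M$, $c\in\hat{M}$ with $c^2=1$, and $i\colon\hat{M}\setminus\{c\}\to\hat{M}\setminus\{1\}$ a bijection with $i(x)=x\,i(x^{-1})$ for all $x\ne c$, such that $J(\alpha,\beta)=\frac{1}{m}\sum_{x\in\hat{M}\setminus\{c\}}\alpha(i(x))\beta(i(x)x^{-1})$ for all $\alpha,\beta\in M$. Let $F=\hat{M}\sqcup\{0\}$ with the operation $\oplus$ for which $0$ is the identity and, for $x,y\ne0$, $x\oplus y=0$ if $x=cy$ and $x\oplus y=x\,i(x/y)^{-1}$ otherwise. Then for all $\alpha,\beta,\gamma\in M$, \[ \sum_{\substack{(x\oplus y)\oplus z=1,\\ x,y,z\in F\setminus\{0\}}}\alpha(x)\beta(y)\gamma(z)=\sum_{\substack{x\oplus(y\oplus z)=1,\\ x,y,z\in F\setminus\{0\}}}\alpha(x)\beta(y)\gamma(z). \]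
   Context: $\hat{M}$ is the Pontryagin dual of $M$, written multiplicatively with identity $1$; for $\alpha\in M$, $x\in\hat{M}$, $\alpha(x)$ is the value of the character $x$ at $\alpha$. $\delta(\alpha)=1$ if $\alpha$ is the identity of $M$ and $0$ otherwise. A Jacobi function on $M$ is a function $J\colon M\times M\to\mathbf{C}$ satisfying: (A) $J(\alpha,\beta)=J(\beta,\alpha)$; (B) with $J^*(\alpha,\beta)=-\delta(\alpha)-\delta(\beta)+J(\alpha,\beta)$, $J^*(\alpha,\beta)J^*(\alpha\beta,\gamma)=J^*(\alpha,\beta\gamma)J^*(\beta,\gamma)$; (C) $\sum_{\beta\in M}J(\alpha_1\beta,\alpha_2\beta^{-1})J(\alpha_3\beta,\alpha_4\beta^{-1})=J(\alpha_1\alpha_4,\alpha_2\alpha_3)$; all for all elements of $M$. *)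

From HB Require Import structures.
From mathcomp Require Import all_boot all_order all_algebra all_fingroup all_solvable all_field all_character.
Set Implicit Arguments. Unset Strict Implicit. Unset Printing Implicit Defensive.
Import Order.TTheory GRing.Theory Num.Theory.
Local Open Scope ring_scope.

(* M is the (abelian) finite group [set: gT]; its Pontryagin dual \hat M is
   realised as the finite type Iirr [set: gT] of irreducible (= linear, since M
   is abelian) complex characters of M, with values in algC. *)

Section Dual.
Variable gT : finGroupType.

Definition Dual := Iirr [set: gT]%G.

(* alpha(x) : value of the character x at alpha *)
Definition ev (x : Dual) (alpha : gT) : algC := 'chi_x alpha.

Definition dmul (x y : Dual) : Dual := cfIirr ('chi_x * 'chi_y)%R.
Definition dinv (x : Dual) : Dual := conjC_Iirr x.
Definition d1 : Dual := 0.

Definition delta (a : gT) : algC := (a == 1%g)%:R.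

Definition Jstar (J : gT -> gT -> algC) (a b : gT) : algC :=
  - delta a - delta b + J a b.

Definition is_Jacobi (J : gT -> gT -> algC) : Prop :=
  [/\ (forall a b, J a b = J b a),
      (forall a b g, Jstar J a b * Jstar J (a * b)%g g
                     = Jstar J a (b * g)%g * Jstar J b g) &
      (forall a1 a2 a3 a4,
          \sum_(b : gT) J (a1 * b)%g (a2 * b^-1)%g * J (a3 * b)%g (a4 * b^-1)%g
          = J (a1 * a4)%g (a2 * a3)%g)].

(* F = \hat M disjoint-union {0}, with None playing the role of 0. *)
Definition oplus (c : Dual) (i : Dual -> Dual) (u v : option Dual) : option Dual :=
  match u, v with
  | None, _ => v
  | _, None => u
  | Some x, Some y =>
      if x == dmul c y then None
      else Some (dmul x (dinv (i (dmul x (dinv y)))))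
  end.

End Dual.

From HB Require Import structures.
From mathcomp Require Import all_boot all_order all_algebra all_fingroup all_solvable all_field all_character.
From mathcomp Require Import ring.
Set Implicit Arguments. Unset Strict Implicit. Unset Printing Implicit Defensive.
Import Order.TTheory GRing.Theory Num.Theory.
Local Open Scope ring_scope.

(* Write m = #|M| and e for c viewed as a character of M.  Substituting
   y = x v^-1 and then z = w u^-1 with w = x ⊕ y, the condition
   (x ⊕ y) ⊕ z = 1 becomes either v = c and z = 1, or u, v <> c and
   x = i(u) i(v).  By orthogonality of characters the left-hand sum is thus
   m e(b) delta(ab) + m^2 J(a,b) J(ab,g), and since ⊕ is commutative the
   right-hand sum is the same expression at (b,g,a).  Expanding J* with the
   help of J(a,a^-1) = delta(a) - e(a)/m shows that m^-2 times the left-hand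
   sum is J*(a,b) J*(ab,g) plus a correction that is invariant under
   rotating (a,b,g), so axiom (B) gives the equality. *)

Section JacobiStar.
Variables (gT : finGroupType) (J : gT -> gT -> algC) (m : algC) (e : gT -> algC).
Hypothesis JC : forall a b, J a b = J b a.
Hypothesis J_invg : forall a, J a a^-1%g = delta a - e a / m.
Hypothesis e_invg : forall a, e a^-1%g = e a.
Implicit Types a b g : gT.

Lemma mul_delta (F : gT -> algC) a : delta a * F a = delta a * F 1%g.
Proof. by rewrite /delta; have [->|_] := eqVneq a 1%g; rewrite ?mul0r. Qed.

Lemma mul_deltaM (F : gT -> algC) a b : delta (a * b)%g * F b = delta (a * b)%g * F a^-1%g.
Proof. by rewrite /delta -eq_invg_mul; have [<-|_] := eqVneq a^-1%g b; rewrite ?mul0r. Qed.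

Definition Jdelta a b g :=
  delta g * J a b + delta a * J b g + delta b * J a g
  - (delta a * delta b + delta b * delta g + delta a * delta g).

Lemma JstarC a b : Jstar J a b = Jstar J b a.
Proof. by rewrite /Jstar JC; ring. Qed.

Lemma Jdelta_rot a b g : Jdelta b g a = Jdelta a b g.
Proof. by rewrite /Jdelta (JC g a) (JC b a); ring. Qed.

Lemma Jstar_mulE a b g :
  Jstar J a b * Jstar J (a * b)%g g
  = J a b * J (a * b)%g g + e b * delta (a * b)%g / m - Jdelta a b g.
Proof.
have dabJ : delta (a * b)%g * J a b
             = delta (a * b)%g * delta a - delta (a * b)%g * e b / m.
  by rewrite (mul_deltaM (J a)) J_invg (mul_deltaM e) e_invg; ring.
have daJ : delta a * J (a * b)%g g = delta a * J b g.
  by have := mul_delta (fun x => J (x * b)%g g) a; rewrite /= mul1g.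
have dbJ : delta b * J (a * b)%g g = delta b * J a g.
  by have := mul_delta (fun x => J (a * x)%g g) b; rewrite /= mulg1.
have dbdab : delta b * delta (a * b)%g = delta b * delta a.
  by have := mul_delta (fun x => delta (a * x)%g) b; rewrite /= mulg1.
rewrite /Jstar /Jdelta; transitivity (J a b * J (a * b)%g g
  - delta (a * b)%g * J a b - delta g * J a b - delta a * J (a * b)%g g
  - delta b * J (a * b)%g g + delta a * delta (a * b)%g + delta a * delta g
  + delta b * delta (a * b)%g + delta b * delta g); first by ring.
by rewrite dabJ daJ dbJ dbdab; ring.
Qed.

End JacobiStar.

Section DualGroup.
Variable gT : finGroupType.
Hypothesis Mab : abelian [set: gT].
Implicit Types (x y z u v w : Dual gT) (a b p q r : gT).

Local Notation m := (#|gT|%:R : algC).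

Lemma Dual_lin_char x : 'chi_x \is a linear_char.
Proof. exact: (char_abelianP _ Mab). Qed.

Lemma ev_neq0 x a : ev x a != 0.
Proof. by rewrite /ev lin_char_neq0 ?Dual_lin_char ?inE. Qed.

Lemma ev_mulg x a b : ev x (a * b)%g = ev x a * ev x b.
Proof. by rewrite /ev (lin_charM (Dual_lin_char x)) ?inE. Qed.

Lemma ev_invg x a : ev x a^-1%g = (ev x a)^-1.
Proof. by rewrite /ev (lin_charV (Dual_lin_char x)) ?inE. Qed.

Lemma ev_dmul x y a : ev (dmul x y) a = ev x a * ev y a.
Proof. by rewrite /ev /dmul cfIirrE ?cfunE // mul_lin_irr ?Dual_lin_char ?mem_irr. Qed.

Lemma ev_dinv x a : ev (dinv x) a = (ev x a)^-1.
Proof.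
rewrite /ev /dinv conjC_IirrE cfunE -(lin_charV (Dual_lin_char x)) ?inE //.
by rewrite (lin_charV_conj (Dual_lin_char x)) ?inE.
Qed.

Lemma ev_d1 a : ev (d1 gT) a = 1.
Proof. by rewrite /ev /d1 irr0 cfun1E inE. Qed.

Lemma dual_ext x y : (forall a, ev x a = ev y a) -> x = y.
Proof. by move=> exy; apply/irr_inj/cfunP. Qed.

Ltac dual_field :=
  apply: dual_ext => ?; rewrite ?(ev_dmul, ev_dinv, ev_d1); field;
  by rewrite ?mulf_neq0 ?invr_neq0 ?ev_neq0.

Lemma dmulA x y z : dmul x (dmul y z) = dmul (dmul x y) z.
Proof. by dual_field. Qed.

Lemma mul1d x : dmul (d1 gT) x = x.
Proof. by dual_field. Qed.

Lemma muld1 x : dmul x (d1 gT) = x.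
Proof. by dual_field. Qed.

Lemma div_eq x y z : (dmul x (dinv y) == z) = (x == dmul z y).
Proof. by apply/eqP/eqP => [<-|->]; dual_field. Qed.

Lemma dinv_div x y : dinv (dmul x (dinv y)) = dmul y (dinv x).
Proof. by dual_field. Qed.

Lemma muldI x : injective (dmul x).
Proof.
move=> v w exvw; apply: dual_ext => a; have := congr1 (fun y => ev y a) exvw.
by rewrite !ev_dmul => /(mulfI (ev_neq0 x a)).
Qed.

Lemma dinv_inj : injective (@dinv gT).
Proof.
move=> v w evw; apply: dual_ext => a; have := congr1 (fun y => ev y a) evw.
by rewrite !ev_dinv => /invr_inj.
Qed.

Lemma div_inj x : injective (fun v => dmul x (dinv v)).
Proof. by move=> v w /muldI /dinv_inj. Qed.

Lemma m_neq0 : m != 0.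
Proof. by rewrite pnatr_eq0 -lt0n -cardsT (cardG_gt0 [set: gT]%G). Qed.

Lemma sum_ev a : \sum_x ev x a = m * delta a.
Proof.
rewrite /delta -cardsT mulr_natr -(cfRegE [set: gT]%G) cfReg_sum sum_cfunE.
by apply: eq_bigr => x _; rewrite cfunE lin_char1 ?Dual_lin_char ?mul1r.
Qed.

Lemma sum_ev_dmul y p q :
  \sum_x ev x p * ev (dmul x y) q = ev y q * m * delta (p * q)%g.
Proof.
rewrite -mulrA -sum_ev big_distrr /=; apply: eq_bigr => x _.
by rewrite ev_dmul ev_mulg; ring.
Qed.

Lemma sum_indicator (X : Dual gT) (H : Dual gT -> algC) :
  \sum_x (x == X)%:R * H x = H X.
Proof. by rewrite (bigD1 X) //= eqxx mul1r big1 ?addr0 // => x /negPf ->; rewrite mul0r. Qed.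

Section Oplus.
Variables (c : Dual gT) (i : Dual gT -> Dual gT).
Hypothesis Hc : dmul c c = d1 gT.
Hypothesis Hi_sym : forall x, x != c -> i x = dmul x (i (dinv x)).

Local Notation "u ⊕ v" := (oplus c i u v) (at level 50, left associativity).

Lemma dinv_c : dinv c = c.
Proof.
apply: dual_ext => a; rewrite ev_dinv.
by apply: (mulIf (ev_neq0 c a)); rewrite mulVf ?ev_neq0 // -ev_dmul Hc ev_d1.
Qed.

Lemma ev_c_invg a : ev c a^-1%g = ev c a.
Proof. by rewrite ev_invg -ev_dinv dinv_c. Qed.

Lemma eq_cmulC x y : (x == dmul c y) = (y == dmul c x).
Proof. by apply/eqP/eqP => ->; rewrite dmulA Hc mul1d. Qed.

Lemma oplusC : commutative (oplus c i).
Proof.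
case=> [x|] [y|] //=; rewrite eq_cmulC; case: ifP => // /negbT nyx; congr Some.
have yx_c : dmul y (dinv x) != c by rewrite div_eq.
by rewrite (Hi_sym yx_c) dinv_div; dual_field.
Qed.

Lemma oplus_div x v :
  Some x ⊕ Some (dmul x (dinv v)) = if v == c then None else Some (dmul x (dinv (i v))).
Proof.
rewrite /=; have -> : dmul x (dinv (dmul x (dinv v))) = v by dual_field.
have -> : dmul c (dmul x (dinv v)) = dmul x (dmul c (dinv v)) by dual_field.
by rewrite -{1}[x]muld1 (inj_eq (@muldI x)) eq_sym div_eq mul1d eq_sym.
Qed.

Lemma sum_oplus_eq1 w (F : Dual gT -> algC) :
  \sum_(z | Some w ⊕ Some z == Some (d1 gT)) F z
  = \sum_(u | u != c) (w == i u)%:R * F (dmul (i u) (dinv u)).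
Proof.
rewrite (reindex_inj (@div_inj w)) big_mkcond [RHS]big_mkcond.
apply: eq_bigr => u _; rewrite oplus_div.
case: (eqVneq u c) => //= _; rewrite (inj_eq Some_inj) div_eq mul1d.
by case: eqP => [->|_]; rewrite ?mul1r ?mul0r.
Qed.

Lemma sum_oplusl_eq1 p q r :
  \sum_x \sum_y \sum_(z | Some x ⊕ Some y ⊕ Some z == Some (d1 gT))
      ev x p * ev y q * ev z r
  = ev c q * m * delta (p * q)%g
    + (\sum_(u | u != c) ev (i u) (p * q)%g * ev (dmul (i u) (dinv u)) r)
      * (\sum_(v | v != c) ev (i v) p * ev (dmul (i v) (dinv v)) q).
Proof.
pose G u := ev (dmul (i u) (dinv u)) r.
transitivity (\sum_x \sum_v ev x p * ev (dmul x (dinv v)) q *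
   (if v == c then 1 else \sum_(u | u != c) (dmul x (dinv (i v)) == i u)%:R * G u)).
  apply: eq_bigr => x _; rewrite (reindex_inj (@div_inj x)); apply: eq_bigr => v _.
  rewrite -big_distrr (oplus_div x v); case: eqP => _; last by rewrite sum_oplus_eq1.
  by rewrite (big_pred1 (d1 gT)) ?ev_d1 // => z; apply: (inj_eq Some_inj).
under eq_bigr do rewrite (bigD1 c) //= eqxx mulr1.
rewrite big_split /= dinv_c sum_ev_dmul; congr (_ + _).
transitivity (\sum_x \sum_(v | v != c) \sum_(u | u != c)
   (x == dmul (i u) (i v))%:R * (ev x p * ev (dmul x (dinv v)) q * G u)).
  apply: eq_bigr => x _; apply: eq_bigr => v /negPf ->; rewrite big_distrr.
  by apply: eq_bigr => u _; rewrite /= div_eq; ring.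
rewrite exchange_big; under eq_bigr do rewrite exchange_big.
under eq_bigr do under eq_bigr do rewrite sum_indicator.
rewrite big_distrlr exchange_big; apply: eq_bigr => v _; apply: eq_bigr => u _.
by rewrite /G ev_mulg !(ev_dmul, ev_dinv) /=; ring.
Qed.

Lemma sum_oplusr_rotate p q r :
  \sum_x \sum_y \sum_(z | Some x ⊕ (Some y ⊕ Some z) == Some (d1 gT))
      ev x p * ev y q * ev z r
  = \sum_y \sum_z \sum_(x | Some y ⊕ Some z ⊕ Some x == Some (d1 gT))
      ev y q * ev z r * ev x p.
Proof.
under eq_bigr do under eq_bigr do rewrite big_mkcond.
rewrite exchange_big; under eq_bigr do rewrite exchange_big.
apply: eq_bigr => y _; apply: eq_bigr => z _; rewrite [RHS]big_mkcond.
by apply: eq_bigr => x _; rewrite oplusC; case: ifP => _; ring.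
Qed.

Section JacobiFunction.
Variable J : gT -> gT -> algC.
Hypothesis HJi : forall a b, J a b =
  m^-1 * \sum_(x | x != c) ev (i x) a * ev (dmul (i x) (dinv x)) b.

Lemma sum_i_J a b :
  \sum_(x | x != c) ev (i x) a * ev (dmul (i x) (dinv x)) b = m * J a b.
Proof. by rewrite HJi mulrA mulfV ?mul1r ?m_neq0. Qed.

Lemma J_invg a : J a a^-1%g = delta a - ev c a / m.
Proof.
apply: (mulfI m_neq0); rewrite -sum_i_J.
transitivity (\sum_(x | x != c) ev x a).
  by apply: eq_bigr => x _; rewrite ev_invg !(ev_dmul, ev_dinv); field; rewrite ?ev_neq0.
have := sum_ev a; rewrite (bigD1 c) //= => /(canRL (addKr _)) ->.
by field; exact: m_neq0.
Qed.

Lemma sum_oplusl_eq1_Jstar p q r :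
  \sum_x \sum_y \sum_(z | Some x ⊕ Some y ⊕ Some z == Some (d1 gT))
      ev x p * ev y q * ev z r
  = m ^+ 2 * (Jstar J p q * Jstar J (p * q)%g r + Jdelta J p q r).
Proof.
rewrite sum_oplusl_eq1 !sum_i_J (Jstar_mulE J_invg ev_c_invg).
by field; exact: m_neq0.
Qed.

End JacobiFunction.

End Oplus.

End DualGroup.

Theorem mainTheorem11 (gT : finGroupType) (Mab : abelian [set: gT])
  (J : gT -> gT -> algC) (HJ : is_Jacobi J)
  (c : Dual gT) (Hc : dmul c c = d1 gT)
  (i : Dual gT -> Dual gT)
  (Hi_range : forall x, x != c -> i x != d1 gT)
  (Hi_inj : {in [pred x | x != c] &, injective i})
  (Hi_surj : forall y, y != d1 gT -> exists2 x, x != c & i x = y)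
  (Hi_sym : forall x, x != c -> i x = dmul x (i (dinv x)))
  (HJi : forall a b : gT,
      J a b = (#|gT|%:R)^-1 *
        \sum_(x : Dual gT | x != c) ev (i x) a * ev (dmul (i x) (dinv x)) b) :
  forall a b g : gT,
    \sum_(x : Dual gT) \sum_(y : Dual gT) \sum_(z : Dual gT |
        oplus c i (oplus c i (Some x) (Some y)) (Some z) == Some (d1 gT))
       ev x a * ev y b * ev z g
  = \sum_(x : Dual gT) \sum_(y : Dual gT) \sum_(z : Dual gT |
        oplus c i (Some x) (oplus c i (Some y) (Some z)) == Some (d1 gT))
       ev x a * ev y b * ev z g.
Proof.
move=> a b g; have [JC JB _] := HJ.
rewrite (sum_oplusr_rotate Mab Hc Hi_sym).
rewrite !(sum_oplusl_eq1_Jstar Mab Hc HJi) (Jdelta_rot JC a) (JstarC JC _ a).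
by rewrite [Jstar J b g * _]mulrC -JB.
Qed.
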